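(* Let $A=(0,0)$ and $B=(b_1,b_2)$ with $b_1>0$ and $0\le b_2\le b_1-1$. Let $s=b_2/b_1$, let $k\in(0,1)$, let $Q=(1-s)(1,0)+s(3/2,1/2)$ and $P=(1-k)(1,1)+kQ$, and let $\gamma(t)=Bt^3+3Pt^2(1-t)+3Pt(1-t)^2$ for $0\le t\le1$. Then $\gamma(t)$ lies in the region $\{(x,y): x>y>0\}$ for every $t\in(0,1)$.
   Context: $\gamma$ is the cubic B\'ezier curve with endpoints $A=\gamma(0)$ and $B=\gamma(1)$ and with both inner control points equal to $P$. *)

From Stdlib Require Import Reals.
Open Scope R_scope.

Definition pt := (R * R)%type.

Definition lerp (s : R) (X Y : pt) : pt :=
  ((1 - s) * fst X + s * fst Y, (1 - s) * snd X + s * snd Y).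

Definition bezier3 (A P1 P2 B : pt) (t : R) : pt :=
  ( (1 - t)^3 * fst A + 3 * t * (1 - t)^2 * fst P1 + 3 * t^2 * (1 - t) * fst P2 + t^3 * fst B,
    (1 - t)^3 * snd A + 3 * t * (1 - t)^2 * snd P1 + 3 * t^2 * (1 - t) * snd P2 + t^3 * snd B ).

Definition in_region (X : pt) : Prop := fst X > snd X /\ snd X > 0.

(* With A = 0 and both inner control points equal to P, the curve is
   gamma(t) = 3t(1-t) P + t^3 B, a combination with positive weight on P and
   nonnegative weight on B.  The region {x > y > 0} is an open convex cone and
   B lies in its closure, so it suffices that P lies in the region.  This holds
   because Q lies on the line x - y = 1 with y >= 0, while (1,1) lies on the
   diagonal with y > 0: their strict mixture P has x - y = k > 0 and y > 0. *)
From Stdlib Require Import Reals Lra Psatz.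
Open Scope R_scope.

Definition in_region_closure (X : pt) : Prop := fst X >= snd X /\ snd X >= 0.

Lemma lerp_in_region_closure (s : R) (X Y : pt) :
  0 <= s <= 1 -> in_region_closure X -> in_region_closure Y ->
  in_region_closure (lerp s X Y).
Proof.
  intros Hs [HX1 HX2] [HY1 HY2]; unfold in_region_closure, lerp; simpl.
  split; nra.
Qed.

Lemma lerp_in_region (k : R) (X Y : pt) :
  0 < k < 1 -> in_region_closure X -> in_region_closure Y ->
  snd X > 0 -> fst Y > snd Y -> in_region (lerp k X Y).
Proof.
  intros Hk [HX1 HX2] [HY1 HY2] HX HY; unfold in_region, lerp; simpl.
  split; nra.
Qed.

Lemma bezier3_origin_double_control (P B : pt) (t : R) :
  bezier3 (0, 0) P P B t =
  (3 * t * (1 - t) * fst P + t^3 * fst B, 3 * t * (1 - t) * snd P + t^3 * snd B).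
Proof. unfold bezier3; simpl; f_equal; ring. Qed.

Lemma in_region_cone (a c : R) (P B : pt) :
  0 < a -> 0 <= c -> in_region P -> in_region_closure B ->
  in_region (a * fst P + c * fst B, a * snd P + c * snd B).
Proof.
  intros Ha Hc [HP1 HP2] [HB1 HB2]; unfold in_region; simpl.
  split; nra.
Qed.

Theorem lemma7 (b1 b2 k : R) :
  b1 > 0 -> 0 <= b2 -> b2 <= b1 - 1 -> 0 < k < 1 ->
  let s := b2 / b1 in
  let Q := lerp s (1, 0) (3/2, 1/2) in
  let P := lerp k (1, 1) Q in
  forall t : R, 0 < t < 1 ->
    in_region (bezier3 (0, 0) P P (b1, b2) t).
Proof.
  intros Hb1 Hb2 Hb12 Hk s Q P t Ht.
  assert (Hs : 0 <= s <= 1).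
  { unfold s; split.
    - apply Rle_mult_inv_pos; lra.
    - apply Rmult_le_reg_r with b1; [lra|].
      field_simplify; lra. }
  assert (HQ : in_region_closure Q).
  { apply lerp_in_region_closure; [assumption | red; simpl; lra ..]. }
  assert (HQgap : fst Q > snd Q) by (unfold Q, lerp; simpl; lra).
  assert (HP : in_region P).
  { apply lerp_in_region; [assumption | red; simpl; lra | assumption | simpl; lra | assumption]. }
  rewrite bezier3_origin_double_control.
  apply in_region_cone; [nra | apply pow_le; lra | assumption | red; simpl; lra].
Qed.
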